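(* For every $\epsilon>0$ and $K>0$ there is $\delta>0$ such that the following holds. Let $\mathbb{A},\mathbb{A}'$ be round cylinders in $\hat{\mathbb{C}}$ and $R,R'$ projective rectangles supported on $\mathbb{A},\mathbb{A}'$ respectively, with canonical Euclidean metrics $E,E'$, and let $\xi\colon R\to R'$ be the canonical linear map. Suppose (1) $R$ and $R'$ are $(\delta,K)$-nearly circular; (2) the lengths of the cores of $\mathbb{A}$ and $\mathbb{A}'$ differ by less than $\delta$; (3) there are constants $V,V'>1/\delta$ with $-K/2<V-V'<K/2$ such that for all vertical leaves $\ell$ of $R$ and $\ell'$ of $R'$, $$-\delta<\mathrm{length}_E(\ell)-V<\delta,\qquad -\delta<\mathrm{length}_{E'}(\ell')-V'<\delta.$$ Then $\xi\colon R\to R'$ is a smooth $(1+\epsilon,K)$-bilipschitz map.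
   Context: A round cylinder $\mathbb{A}\subset\hat{\mathbb{C}}$ is an annulus bounded by two disjoint round circles; its axis is the geodesic of $\mathbb{H}^3$ orthogonal to the two hyperbolic planes bounded by these circles; its core is the segment of the axis between these planes; its vertical foliation is by round circles bounding planes orthogonal to the axis. The canonical Euclidean metric on $\mathbb{A}$ is induced from the flat metric on $\hat{\mathbb{C}}$ minus the endpoints of the axis (a biinfinite Euclidean cylinder), normalized so that vertical circles have length $2\pi$. A projective structure on a rectangle $R$ (with chosen horizontal and vertical edges) is supported on $\mathbb{A}$ if its developing map maps into $\mathbb{A}$, the horizontal edges are arcs properly embedded in $\mathbb{A}$ transverse to the vertical foliation and joining the boundary circles, and the vertical edges immerse into the boundary circles; $R$ inherits by pullback the vertical foliation (whose leaves are the vertical leaves) and the Euclidean metric. A circular rectangle supported on $\mathbb{A}$ has horizontal edges orthogonal to the vertical foliation. A supported arc is $\delta$-nearly circular if it is contained in a circular rectangle of height at most $\delta$ and meets each vertical leaf at an angle $\delta$-close to $\pi/2$. $R$ is $(\delta,K)$-nearly circular if the core of $\mathbb{A}$ has length at least $K$ and each horizontal edge of $R$ is $\delta$-nearly circular. The canonical linear map $\xi\colon R\to R'$ is the unique diffeomorphism preserving the left and right vertical edges and the horizontal edges, mapping each vertical leaf of $R$ linearly (with respect to the Euclidean metrics) onto a vertical leaf of $R'$, and such that the induced map on horizontal coordinates is linear. A map is $A$-bilipschitz if $\frac1A d(p,q)<d(\phi(p),\phi(q))<A\,d(p,q)$, a $B$-rough isometry if $d(p,q)-B<d(\phi(p),\phi(q))<d(p,q)+B$,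 and $(A,B)$-bilipschitz if both hold (and it is piecewise differentiable). *)

From Stdlib Require Import Reals Lra Sorting.Sorted List.
From Coquelicot Require Import Coquelicot.
Import ListNotations.
Open Scope R_scope.

(* A round cylinder whose core has length L is Moebius-equivalent to   *)
(* the annulus {1 <= |z| <= e^L}; in log coordinates z = e^(t + i th)  *)
(* its canonical Euclidean metric is dt^2 + dth^2 (vertical circles    *)
(* t = const have length 2 pi), and the core length is L.              *)
(* A projective rectangle supported on it, after lifting the           *)
(* developing map to the universal cover [0,L] x R of the annulus, is  *)
(* the region { (t,th) | 0 <= t <= L, f t <= th <= g t } where the     *)
(* bottom/top horizontal edges are the graphs of f < g, the left/right *)
(* vertical edges lie on t = 0 and t = L, and the vertical leaves are  *)
(* the segments {t} x [f t, g t].                        *)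

Definition smooth1 (h : R -> R) : Prop := forall (n : nat) (x : R), ex_derive_n h n x.

Definition region (L : R) (f g : R -> R) (p : R * R) : Prop :=
  0 <= fst p <= L /\ f (fst p) <= snd p <= g (fst p).

Definition eucl (p q : R * R) : R :=
  sqrt ((fst p - fst q) ^ 2 + (snd p - snd q) ^ 2).

Fixpoint poly_len (gam : R -> R * R) (l : list R) : R :=
  match l with
  | a :: ((b :: _) as l') => eucl (gam a) (gam b) + poly_len gam l'
  | _ => 0
  end.

Definition path_le (Omega : R * R -> Prop) (p q : R * R) (M : R) : Prop :=
  exists gam : R -> R * R,
    (forall s, continuous gam s) /\ gam 0 = p /\ gam 1 = q /\
    (forall s, 0 <= s <= 1 -> Omega (gam s)) /\
    (forall l : list R, Sorted Rle l -> List.Forall (fun s => 0 <= s <= 1) l ->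
        poly_len gam l <= M).

Definition pdist (Omega : R * R -> Prop) (p q : R * R) : R :=
  real (Glb_Rbar (fun M => path_le Omega p q M)).

(* iterated partial derivatives: true = d/dt, false = d/dth *)
Fixpoint iterp (ds : list bool) (F : R * R -> R) : R * R -> R :=
  match ds with
  | nil => F
  | b :: ds' =>
      let G := iterp ds' F in
      if b then fun p => Derive (fun t => G (t, snd p)) (fst p)
      else fun p => Derive (fun s => G (fst p, s)) (snd p)
  end.

Definition Cinf2 (U : R * R -> Prop) (F : R * R -> R) : Prop :=
  forall (ds : list bool) (p : R * R), U p ->
    continuous (iterp ds F) p /\
    ex_derive (fun t => iterp ds F (t, snd p)) (fst p) /\
    ex_derive (fun s => iterp ds F (fst p, s)) (snd p).

Definition smooth_map (Omega : R * R -> Prop) (phi : R * R -> R * R) : Prop :=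
  exists U : R * R -> Prop, open U /\ (forall p, Omega p -> U p) /\
    Cinf2 U (fun p => fst (phi p)) /\ Cinf2 U (fun p => snd (phi p)).

Definition nearly_circular_arc (delta L : R) (h : R -> R) : Prop :=
  (exists c ht, 0 < ht <= delta /\ forall t, 0 <= t <= L -> c <= h t <= c + ht) /\
  (* angle between (1, h' t) and the vertical leaf direction (0,1) is
     pi/2 - atan (h' t) *)
  (forall t, 0 <= t <= L -> Rabs (PI / 2 - (PI / 2 - atan (Derive h t))) < delta).

Definition nearly_circular_rect (delta K L : R) (f g : R -> R) : Prop :=
  K <= L /\ nearly_circular_arc delta L f /\ nearly_circular_arc delta L g.

Definition canon_xi (L : R) (f g : R -> R) (L' : R) (f' g' : R -> R)
    (p : R * R) : R * R :=
  let t := fst p in let th := snd p in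
  let t' := t * L' / L in
  (t', f' t' + (th - f t) * (g' t' - f' t') / (g t - f t)).

Definition bilip (A B : R) (Om Om' : R * R -> Prop) (phi : R * R -> R * R) : Prop :=
  (forall p q, Om p -> Om q -> p <> q ->
     / A * pdist Om p q < pdist Om' (phi p) (phi q) /\
     pdist Om' (phi p) (phi q) < A * pdist Om p q) /\
  (forall p q, Om p -> Om q ->
     pdist Om p q - B < pdist Om' (phi p) (phi q) /\
     pdist Om' (phi p) (phi q) < pdist Om p q + B).

From Pilot Require Import Defs.
From Stdlib Require Import Reals Lra Psatz Sorting.Sorted List.
From Coquelicot Require Import Coquelicot.
Import ListNotations.
Open Scope R_scope.

(* In the coordinates of [Defs], R is the region between the graphs of f < g over [0, L], and
   [canon_xi] rescales t by L'/L and maps each vertical leaf affinely onto the corresponding leaf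
   of R', with scaling factor N/D (the ratio of the leaf lengths). The horizontal edges are
   delta-close to horizontal lines with slopes at most d0 ~ delta, and the leaves have length
   V +- delta with V > 1/delta. Hence L'/L = 1 + O(delta/K) and N/D = 1 + O(delta K), and N/D
   varies by O(d0) per unit of t, so [canon_xi] is Lipschitz with constant
   1 + O(delta/K + delta K + d0) for the Euclidean metric; it also changes distances by at most
   K/2 + O(delta), because the vertical stretch moves points of a leaf by at most |V - V'| < K/2.
   Since R contains a horizontal strip whose delta-neighbourhood contains R, its path metric is
   within 4 delta of the Euclidean one, so both bounds pass to the path metrics; the lower bounds
   follow because the inverse of [canon_xi] is the canonical linear map R' -> R. Smoothness holds
   because [canon_xi] is a rational expression in smooth functions. *)

(** * The Euclidean norm in the plane *)

Lemma Rabs_sub_le a b : Rabs (a - b) <= Rabs a + Rabs b.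
Proof. unfold Rminus. rewrite <- (Rabs_Ropp b). apply Rabs_triang. Qed.

Lemma Rabs_add4_le a b c e : Rabs (a - b + c + e) <= Rabs a + Rabs b + Rabs c + Rabs e.
Proof.
  pose proof (Rabs_sub_le a b). pose proof (Rabs_triang (a - b) c).
  pose proof (Rabs_triang (a - b + c) e). lra.
Qed.

Lemma Rdiv_le_compat x y a b : 0 <= x <= y -> 0 < a <= b -> x / b <= y / a.
Proof.
  intros Hx Ha. unfold Rdiv. apply Rmult_le_compat; try lra.
  - left. apply Rinv_0_lt_compat. lra.
  - apply Rinv_le_contravar; lra.
Qed.

Definition norm2 (x y : R) : R := sqrt (x ^ 2 + y ^ 2).

Lemma eucl_norm2 p q : eucl p q = norm2 (fst q - fst p) (snd q - snd p).
Proof. unfold eucl, norm2. f_equal. ring. Qed.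

Lemma norm2_ge_0 x y : 0 <= norm2 x y.
Proof. apply sqrt_pos. Qed.

Lemma norm2_sqr x y : norm2 x y * norm2 x y = x ^ 2 + y ^ 2.
Proof. unfold norm2. rewrite sqrt_sqrt; nra. Qed.

Lemma norm2_le x y a : 0 <= a -> x ^ 2 + y ^ 2 <= a * a -> norm2 x y <= a.
Proof.
  intros Ha H. unfold norm2. rewrite <- (sqrt_square a Ha). now apply sqrt_le_1_alt.
Qed.

Lemma norm2_triang a b c d : norm2 (a + c) (b + d) <= norm2 a b + norm2 c d.
Proof.
  pose proof (norm2_sqr a b) as Hab. pose proof (norm2_sqr c d) as Hcd.
  pose proof (norm2_ge_0 a b). pose proof (norm2_ge_0 c d).
  assert (Hcs : a * c + b * d <= norm2 a b * norm2 c d).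
  { assert (Hsq : (norm2 a b * norm2 c d) ^ 2 = (a * c + b * d) ^ 2 + (a * d - b * c) ^ 2).
    { replace ((norm2 a b * norm2 c d) ^ 2)
        with ((norm2 a b * norm2 a b) * (norm2 c d * norm2 c d)) by ring.
      rewrite Hab, Hcd. ring. }
    destruct (Rle_or_lt (a * c + b * d) (norm2 a b * norm2 c d)) as [|Hlt]; [easy|].
    pose proof (pow2_ge_0 (a * d - b * c)).
    assert (Hgt : (norm2 a b * norm2 c d) * (norm2 a b * norm2 c d)
                  < (a * c + b * d) * (a * c + b * d))
      by (apply Rmult_le_0_lt_compat; nra).
    simpl in Hsq. lra. }
  apply norm2_le; nra.
Qed.

Lemma Rabs_le_norm2 x y : Rabs x <= norm2 x y.
Proof. pose proof (norm2_sqr x y). pose proof (norm2_ge_0 x y). apply Rabs_le; nra. Qed.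

Lemma norm2_le_Rabs x y : norm2 x y <= Rabs x + Rabs y.
Proof.
  pose proof (Rabs_pos x). pose proof (Rabs_pos y).
  apply norm2_le; [lra|]. rewrite <- (pow2_abs x), <- (pow2_abs y).
  pose proof (Rmult_le_pos _ _ (Rabs_pos x) (Rabs_pos y)). nra.
Qed.

Lemma norm2_scal k x y : 0 <= k -> norm2 (k * x) (k * y) = k * norm2 x y.
Proof.
  intros Hk. unfold norm2.
  replace ((k * x) ^ 2 + (k * y) ^ 2) with (k ^ 2 * (x ^ 2 + y ^ 2)) by ring.
  rewrite sqrt_mult by nra. now rewrite sqrt_pow2.
Qed.

Lemma norm2_0_l y : norm2 0 y = Rabs y.
Proof.
  unfold norm2. replace (0 ^ 2 + y ^ 2) with (Rsqr y) by (unfold Rsqr; ring).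
  apply sqrt_Rsqr_abs.
Qed.

Lemma norm2_le_perturb x y x' y' :
  norm2 x' y' <= norm2 x y + Rabs (x' - x) + Rabs (y' - y).
Proof.
  replace x' with (x + (x' - x)) at 1 by ring. replace y' with (y + (y' - y)) at 1 by ring.
  pose proof (norm2_triang x y (x' - x) (y' - y)). pose proof (norm2_le_Rabs (x' - x) (y' - y)).
  lra.
Qed.

Lemma norm2_shear_le lam r mu c x y Y : 0 <= lam <= mu -> 0 <= r <= mu -> 0 <= c ->
  Rabs (Y - r * y) <= c * Rabs x -> norm2 (lam * x) Y <= (mu + c) * norm2 x y.
Proof.
  intros Hlam Hr Hc HY.
  replace (lam * x) with (lam * x + 0) by ring. replace Y with (r * y + (Y - r * y)) by ring.
  eapply Rle_trans; [apply norm2_triang|]. rewrite norm2_0_l.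
  assert (Hdiag : norm2 (lam * x) (r * y) <= mu * norm2 x y).
  { pose proof (norm2_ge_0 x y). apply norm2_le; [nra|].
    replace (mu * norm2 x y * (mu * norm2 x y)) with (mu * mu * (norm2 x y * norm2 x y)) by ring.
    rewrite norm2_sqr. pose proof (pow2_ge_0 x). pose proof (pow2_ge_0 y).
    assert (lam * lam <= mu * mu) by nra. assert (r * r <= mu * mu) by nra. nra. }
  pose proof (Rabs_le_norm2 x y).
  assert (c * Rabs x <= c * norm2 x y) by (apply Rmult_le_compat_l; auto). lra.
Qed.

Lemma eucl_gt_0 p q : p <> q -> 0 < eucl p q.
Proof.
  intros Hpq. apply sqrt_lt_R0. destruct p as [a b], q as [c d]; simpl.
  destruct (Req_dec a c) as [<-|Hac].
  - destruct (Req_dec b d) as [<-|Hbd]; [congruence|].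
    pose proof (pow2_gt_0 (b - d) ltac:(lra)). nra.
  - pose proof (pow2_gt_0 (a - c) ltac:(lra)). pose proof (pow2_ge_0 (b - d)). lra.
Qed.

(** * The induced path metric *)

Lemma poly_len_le_of_chord_bound (gam : R -> R * R) (ell : R -> R) :
  (forall x y, 0 <= x -> x <= y -> y <= 1 -> eucl (gam x) (gam y) <= ell y - ell x) ->
  forall l, Sorted Rle l -> List.Forall (fun s => 0 <= s <= 1) l ->
  poly_len gam l <= ell 1 - ell 0.
Proof.
  intros Hchord.
  assert (Hmono : forall x y, 0 <= x -> x <= y -> y <= 1 -> ell x <= ell y).
  { intros x y Hx Hxy Hy. pose proof (Hchord x y Hx Hxy Hy).
    assert (0 <= eucl (gam x) (gam y)) by apply sqrt_pos. lra. }
  assert (Hcons : forall l a, Sorted Rle (a :: l) -> List.Forall (fun s => 0 <= s <= 1) (a :: l) ->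
            poly_len gam (a :: l) <= ell 1 - ell a).
  { induction l as [|b l IH]; intros a Hs Hf.
    - inversion Hf; subst. simpl. pose proof (Hmono a 1). lra.
    - inversion Hs as [|? ? Hs1 Hh]; subst. inversion Hh as [|? ? Hab]; subst.
      inversion Hf as [|? ? Ha Hf1]; subst. inversion Hf1 as [|? ? Hb _]; subst.
      change (poly_len gam (a :: b :: l)) with (eucl (gam a) (gam b) + poly_len gam (b :: l)).
      pose proof (IH b Hs1 Hf1). pose proof (Hchord a b). lra. }
  intros [|a l] Hs Hf.
  - simpl. pose proof (Hmono 0 1). lra.
  - inversion Hf; subst. pose proof (Hmono 0 a). pose proof (Hcons l a Hs Hf). lra.
Qed.

Lemma path_le_eucl Om p q M : path_le Om p q M -> eucl p q <= M.
Proof.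
  intros (gam & _ & H0 & H1 & _ & Hlen).
  specialize (Hlen [0; 1]). simpl in Hlen. rewrite H0, H1 in Hlen.
  assert (eucl p q + 0 <= M) by (apply Hlen; repeat constructor; lra). lra.
Qed.

(* [pdist] is [real] of an [Rbar] infimum: it is meaningful only when some path exists. *)
Lemma Glb_path_le_finite Om p q : (exists M, path_le Om p q M) ->
  Glb_Rbar (fun M => path_le Om p q M) = Finite (pdist Om p q).
Proof.
  intros [M HM]. unfold pdist.
  destruct (Glb_Rbar_correct (fun M => path_le Om p q M)) as [Hlb Hglb].
  specialize (Hlb M HM).
  assert (Hge : Rbar_le (eucl p q) (Glb_Rbar (fun M => path_le Om p q M))).
  { apply Hglb. intros x Hx. exact (path_le_eucl _ _ _ _ Hx). }
  destruct (Glb_Rbar (fun M => path_le Om p q M)); simpl in *; easy.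
Qed.

Lemma pdist_le Om p q M : path_le Om p q M -> pdist Om p q <= M.
Proof.
  intros H. pose proof (Glb_path_le_finite Om p q (ex_intro _ M H)) as E.
  destruct (Glb_Rbar_correct (fun M => path_le Om p q M)) as [Hlb _].
  specialize (Hlb M H). now rewrite E in Hlb.
Qed.

Lemma pdist_ge Om p q b : (exists M, path_le Om p q M) ->
  (forall M, path_le Om p q M -> b <= M) -> b <= pdist Om p q.
Proof.
  intros Hex H. pose proof (Glb_path_le_finite Om p q Hex) as E.
  destruct (Glb_Rbar_correct (fun M => path_le Om p q M)) as [_ Hglb].
  assert (Hb : Rbar_le b (Glb_Rbar (fun M => path_le Om p q M))) by (apply Hglb; exact H).
  now rewrite E in Hb.
Qed.

Lemma eucl_le_pdist Om p q : (exists M, path_le Om p q M) -> eucl p q <= pdist Om p q.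
Proof. intros H. apply pdist_ge; [easy|]. apply path_le_eucl. Qed.

Lemma continuous_pair {T : UniformSpace} (u v : T -> R) x :
  continuous u x -> continuous v x -> continuous (fun y => (u y, v y)) x.
Proof.
  intros Hu Hv. apply (continuous_comp_2 u v pair); auto.
  apply continuous_ext with (f := fun z : R * R => z); [now intros []|apply continuous_id].
Qed.

(* The absolute-value form makes continuity immediate. *)
Definition clamp01 (x : R) : R := (Rabs x - Rabs (x - 1) + 1) / 2.

Lemma clamp01_continuous x : continuous clamp01 x.
Proof.
  unfold clamp01.
  apply (continuous_mult (fun x => Rabs x - Rabs (x - 1) + 1) (fun _ => / 2));
    [|apply continuous_const].
  apply (continuous_plus (fun x => Rabs x - Rabs (x - 1)) (fun _ => 1)); [|apply continuous_const].
  apply (continuous_minus Rabs (fun x => Rabs (x - 1))); [apply continuous_Rabs|].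
  apply continuous_Rabs_comp.
  apply (continuous_minus (fun x => x) (fun _ => 1)); [apply continuous_id|apply continuous_const].
Qed.

Lemma clamp01_id x : 0 <= x <= 1 -> clamp01 x = x.
Proof. unfold clamp01, Rabs. repeat destruct Rcase_abs; lra. Qed.

Lemma clamp01_0 x : x <= 0 -> clamp01 x = 0.
Proof. unfold clamp01, Rabs. repeat destruct Rcase_abs; lra. Qed.

Lemma clamp01_1 x : 1 <= x -> clamp01 x = 1.
Proof. unfold clamp01, Rabs. repeat destruct Rcase_abs; lra. Qed.

Lemma clamp01_range x : 0 <= clamp01 x <= 1.
Proof. unfold clamp01, Rabs. repeat destruct Rcase_abs; lra. Qed.

Lemma clamp01_le x y : x <= y -> clamp01 x <= clamp01 y.
Proof. unfold clamp01, Rabs. repeat destruct Rcase_abs; lra. Qed.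

Definition segment_in (Om : R * R -> Prop) (P Q : R * R) : Prop :=
  forall s, 0 <= s <= 1 -> Om (fst P + s * (fst Q - fst P), snd P + s * (snd Q - snd P)).

(* [stage k] runs from 0 to 1 while [s] runs through [k/3, (k+1)/3]. *)
Definition stage (k s : R) : R := clamp01 (3 * s - k).

Lemma stage_continuous k u s : continuous (fun s => stage k s * u) s.
Proof.
  apply (continuous_mult (fun s => stage k s) (fun _ => u)); [|apply continuous_const].
  apply (continuous_comp (fun s => 3 * s - k) clamp01); [|apply clamp01_continuous].
  apply (continuous_minus (fun s => 3 * s) (fun _ => k)); [|apply continuous_const].
  apply (continuous_mult (fun _ => 3) (fun s => s)); [apply continuous_const|apply continuous_id].
Qed.

Lemma norm2_sum3_le k1 k2 k3 x1 y1 x2 y2 x3 y3 : 0 <= k1 -> 0 <= k2 -> 0 <= k3 ->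
  norm2 (k1 * x1 + k2 * x2 + k3 * x3) (k1 * y1 + k2 * y2 + k3 * y3)
    <= k1 * norm2 x1 y1 + k2 * norm2 x2 y2 + k3 * norm2 x3 y3.
Proof.
  intros H1 H2 H3.
  rewrite <- !norm2_scal by assumption.
  eapply Rle_trans; [apply norm2_triang|].
  apply Rplus_le_compat_r, norm2_triang.
Qed.

Section BrokenLine.
Variables (P A B Q : R * R).

Definition broken_line_coord (pr : R * R -> R) (s : R) : R :=
  pr P + stage 0 s * (pr A - pr P) + stage 1 s * (pr B - pr A) + stage 2 s * (pr Q - pr B).

Definition broken_line (s : R) : R * R := (broken_line_coord fst s, broken_line_coord snd s).

Definition broken_line_len (s : R) : R :=
  stage 0 s * eucl P A + stage 1 s * eucl A B + stage 2 s * eucl B Q.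

Lemma broken_line_continuous s : continuous broken_line s.
Proof.
  assert (Hcoord : forall pr, continuous (broken_line_coord pr) s).
  { intros pr. unfold broken_line_coord.
    apply (continuous_plus (fun s => _ + stage 0 s * _ + stage 1 s * _) (fun s => stage 2 s * _));
      [|apply stage_continuous].
    apply (continuous_plus (fun s => _ + stage 0 s * _) (fun s => stage 1 s * _));
      [|apply stage_continuous].
    apply (continuous_plus (fun _ => _) (fun s => stage 0 s * _));
      [apply continuous_const|apply stage_continuous]. }
  apply continuous_pair; apply Hcoord.
Qed.

Lemma broken_line_0 : broken_line 0 = P.
Proof.
  unfold broken_line, broken_line_coord, stage. rewrite !clamp01_0 by lra.
  destruct P; simpl; f_equal; ring.
Qed.

Lemma broken_line_1 : broken_line 1 = Q.
Proof.
  unfold broken_line, broken_line_coord, stage. rewrite !clamp01_1 by lra.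
  destruct Q; simpl; f_equal; ring.
Qed.

Lemma broken_line_in Om : segment_in Om P A -> segment_in Om A B -> segment_in Om B Q ->
  forall s, 0 <= s <= 1 -> Om (broken_line s).
Proof.
  intros HPA HAB HBQ s Hs.
  assert (Hc : forall k, 0 <= stage k s <= 1) by (intros; apply clamp01_range).
  unfold broken_line, broken_line_coord.
  destruct (Rle_dec s (1 / 3)) as [H1|H1]; [|destruct (Rle_dec s (2 / 3)) as [H2|H2]].
  - assert (E1 : stage 1 s = 0) by (apply clamp01_0; lra).
    assert (E2 : stage 2 s = 0) by (apply clamp01_0; lra).
    rewrite E1, E2, !Rmult_0_l, !Rplus_0_r. exact (HPA _ (Hc 0)).
  - assert (E0 : stage 0 s = 1) by (apply clamp01_1; lra).
    assert (E2 : stage 2 s = 0) by (apply clamp01_0; lra).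
    rewrite E0, E2, !Rmult_0_l, !Rplus_0_r, !Rmult_1_l.
    replace (fst P + (fst A - fst P)) with (fst A) by ring.
    replace (snd P + (snd A - snd P)) with (snd A) by ring. exact (HAB _ (Hc 1)).
  - assert (E0 : stage 0 s = 1) by (apply clamp01_1; lra).
    assert (E1 : stage 1 s = 1) by (apply clamp01_1; lra).
    rewrite E0, E1, !Rmult_1_l.
    replace (fst P + (fst A - fst P) + (fst B - fst A)) with (fst B) by ring.
    replace (snd P + (snd A - snd P) + (snd B - snd A)) with (snd B) by ring.
    exact (HBQ _ (Hc 2)).
Qed.

Lemma broken_line_chord x y : x <= y ->
  eucl (broken_line x) (broken_line y) <= broken_line_len y - broken_line_len x.
Proof.
  intros Hxy. unfold broken_line, broken_line_coord, broken_line_len. rewrite !eucl_norm2; simpl.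
  set (k i := stage i y - stage i x).
  assert (Hk : forall i, 0 <= k i).
  { intros i. assert (stage i x <= stage i y) by (apply clamp01_le; lra). unfold k. lra. }
  match goal with |- norm2 ?X ?Y <= _ =>
    replace X with (k 0 * (fst A - fst P) + k 1 * (fst B - fst A) + k 2 * (fst Q - fst B))
      by (unfold k; ring);
    replace Y with (k 0 * (snd A - snd P) + k 1 * (snd B - snd A) + k 2 * (snd Q - snd B))
      by (unfold k; ring) end.
  eapply Rle_trans; [apply norm2_sum3_le; apply Hk|].
  right. unfold k. ring.
Qed.

Lemma path_le_broken_line Om :
  segment_in Om P A -> segment_in Om A B -> segment_in Om B Q ->
  path_le Om P Q (eucl P A + eucl A B + eucl B Q).
Proof.
  intros HPA HAB HBQ. exists broken_line.
  split; [|split; [|split; [|split]]].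
  - exact broken_line_continuous.
  - exact broken_line_0.
  - exact broken_line_1.
  - now apply broken_line_in.
  - intros l Hsorted Hin.
    replace (eucl P A + eucl A B + eucl B Q) with (broken_line_len 1 - broken_line_len 0).
    + apply poly_len_le_of_chord_bound; [|easy|easy].
      intros x y _ Hxy _. now apply broken_line_chord.
    + unfold broken_line_len, stage. rewrite !clamp01_1, !clamp01_0 by lra. ring.
Qed.

End BrokenLine.

Lemma poly_len_image_le (phi : R * R -> R * R) (gam : R -> R * R) (Om : R * R -> Prop) c :
  (forall s, 0 <= s <= 1 -> Om (gam s)) ->
  (forall x y, Om x -> Om y -> eucl (phi x) (phi y) <= c * eucl x y) ->
  forall l, List.Forall (fun s => 0 <= s <= 1) l ->
  poly_len (fun s => phi (gam (clamp01 s))) l <= c * poly_len gam l.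
Proof.
  intros Hin Hlip l Hl.
  induction Hl as [|a l Ha Hl IH]; [simpl; lra|].
  destruct l as [|b l]; [simpl; lra|].
  inversion Hl as [|? ? Hb _]; subst.
  change (eucl (phi (gam (clamp01 a))) (phi (gam (clamp01 b)))
          + poly_len (fun s => phi (gam (clamp01 s))) (b :: l)
          <= c * (eucl (gam a) (gam b) + poly_len gam (b :: l))).
  rewrite (clamp01_id a Ha), (clamp01_id b Hb).
  pose proof (Hlip _ _ (Hin a Ha) (Hin b Hb)). lra.
Qed.

Lemma path_le_image (Om Om' : R * R -> Prop) (phi : R * R -> R * R) c p q M :
  0 <= c -> (forall x, Om x -> Om' (phi x)) -> (forall x, Om x -> continuous phi x) ->
  (forall x y, Om x -> Om y -> eucl (phi x) (phi y) <= c * eucl x y) ->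
  path_le Om p q M -> path_le Om' (phi p) (phi q) (c * M).
Proof.
  intros Hc Hmap Hcont Hlip (gam & Hgam & H0 & H1 & Hin & Hlen).
  (* [gam] is only known to stay in [Om] on [0,1], and [phi] is only continuous on [Om]. *)
  exists (fun s => phi (gam (clamp01 s))). split; [|split; [|split; [|split]]].
  - intros s. apply (continuous_comp (fun s => gam (clamp01 s)) phi).
    + apply (continuous_comp clamp01 gam); [apply clamp01_continuous|apply Hgam].
    + apply Hcont, Hin, clamp01_range.
  - now rewrite clamp01_id, H0 by lra.
  - now rewrite clamp01_id, H1 by lra.
  - intros s _. apply Hmap, Hin, clamp01_range.
  - intros l Hs Hf. eapply Rle_trans; [apply (poly_len_image_le phi gam Om c); auto|].
    now apply Rmult_le_compat_l, Hlen.
Qed.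

Lemma pdist_image_le (Om Om' : R * R -> Prop) (phi : R * R -> R * R) c p q :
  0 < c -> (forall x, Om x -> Om' (phi x)) -> (forall x, Om x -> continuous phi x) ->
  (forall x y, Om x -> Om y -> eucl (phi x) (phi y) <= c * eucl x y) ->
  (exists M, path_le Om p q M) ->
  pdist Om' (phi p) (phi q) <= c * pdist Om p q.
Proof.
  intros Hc Hmap Hcont Hlip Hex.
  assert (H : pdist Om' (phi p) (phi q) / c <= pdist Om p q).
  { apply pdist_ge; [easy|]. intros M HM.
    apply Rle_div_l; [easy|]. rewrite Rmult_comm. apply pdist_le.
    apply (path_le_image Om); auto; lra. }
  apply Rle_div_l in H; [lra|easy].
Qed.

Lemma path_le_weaken Om p q M M' : M <= M' -> path_le Om p q M -> path_le Om p q M'.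
Proof.
  intros HM (gam & H1 & H2 & H3 & H4 & H5). exists gam.
  repeat split; auto. intros l Hs Hf. specialize (H5 l Hs Hf). lra.
Qed.

Lemma lerp_between a b x y s :
  a <= x <= b -> a <= y <= b -> 0 <= s <= 1 -> a <= x + s * (y - x) <= b.
Proof. intros. split; nra. Qed.

(* Enter the strip [lo, hi] vertically, cross it in a straight line, and leave it vertically; the
   vertical legs have length at most [d]. *)
Lemma region_path_le L f g d lo hi P Q :
  lo <= hi -> (forall t, 0 <= t <= L -> lo - d <= f t <= lo /\ hi <= g t <= hi + d) ->
  region L f g P -> region L f g Q ->
  path_le (region L f g) P Q (eucl P Q + 4 * d).
Proof.
  intros Hlohi Hfg [HtP HthP] [HtQ HthQ].
  set (clip th := Rmax lo (Rmin hi th)).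
  assert (Hclip : forall th, lo <= clip th <= hi).
  { intros th. unfold clip, Rmax, Rmin. repeat destruct Rle_dec; lra. }
  assert (Hclip_near : forall t th, 0 <= t <= L -> f t <= th <= g t -> Rabs (clip th - th) <= d).
  { intros t th Ht Hth. destruct (Hfg t Ht). apply Rabs_le.
    unfold clip, Rmax, Rmin. repeat destruct Rle_dec; lra. }
  set (A := (fst P, clip (snd P))). set (B := (fst Q, clip (snd Q))).
  pose proof (Hclip_near _ _ HtP HthP) as HPA.
  pose proof (Hclip_near _ _ HtQ HthQ) as HQB.
  eapply path_le_weaken; [|apply (path_le_broken_line P A B Q)].
  - rewrite !eucl_norm2. unfold A, B; simpl. rewrite !Rminus_diag, !norm2_0_l.
    pose proof (norm2_le_perturb (fst Q - fst P) (snd Q - snd P)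
                  (fst Q - fst P) (clip (snd Q) - clip (snd P))) as Hmid.
    rewrite Rminus_diag, Rabs_R0 in Hmid.
    replace (clip (snd Q) - clip (snd P) - (snd Q - snd P))
      with ((clip (snd Q) - snd Q) - (clip (snd P) - snd P)) in Hmid by ring.
    pose proof (Rabs_sub_le (clip (snd Q) - snd Q) (clip (snd P) - snd P)).
    rewrite (Rabs_minus_sym (snd Q)). lra.
  - intros s Hs. unfold A; simpl. destruct (Hfg _ HtP). pose proof (Hclip (snd P)).
    split; simpl; [lra|]. rewrite Rminus_diag, Rmult_0_r, Rplus_0_r.
    apply lerp_between; [lra|lra|easy].
  - intros s Hs. unfold A, B; simpl. pose proof (Hclip (snd P)). pose proof (Hclip (snd Q)).
    assert (Ht : 0 <= fst P + s * (fst Q - fst P) <= L) by (apply lerp_between; lra).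
    split; [easy|]. destruct (Hfg _ Ht). simpl.
    pose proof (lerp_between lo hi _ _ s (Hclip (snd P)) (Hclip (snd Q)) Hs). lra.
  - intros s Hs. unfold B; simpl. destruct (Hfg _ HtQ). pose proof (Hclip (snd Q)).
    split; simpl; [lra|]. rewrite Rminus_diag, Rmult_0_r, Rplus_0_r.
    apply lerp_between; [lra|lra|easy].
Qed.

(** * Smoothness of the canonical linear map *)

Lemma smooth1_Derive h : smooth1 h -> smooth1 (Derive h).
Proof.
  intros H [|n] x; [easy|].
  specialize (H (S (S n)) x). simpl in H.
  eapply ex_derive_ext; [|exact H]. intros y. simpl.
  change (Derive h) with (Derive_n h 1).
  now rewrite Derive_n_comp, Nat.add_1_r.
Qed.

Lemma smooth1_ex_derive h x : smooth1 h -> ex_derive h x.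
Proof. intros H. exact (H 1%nat x). Qed.

Lemma smooth1_continuous h x : smooth1 h -> continuous h x.
Proof.
  intros H. apply (ex_derive_continuous (K := R_AbsRing) (V := R_NormedModule)).
  now apply smooth1_ex_derive.
Qed.

(* Formal expressions in the coordinates [(t, th)] built from smooth functions of one variable.
   They are closed under formal partial differentiation ([deriv_expr true] is d/dt), which is how
   [canon_xi] is seen to be C^oo. *)
Inductive expr : Type :=
  | ECst (c : R) | ET | ETh | EApp (h : R -> R) (e : expr)
  | EAdd (e1 e2 : expr) | ESub (e1 e2 : expr) | EMul (e1 e2 : expr) | EInv (e : expr).

Fixpoint eval (e : expr) (p : R * R) : R :=
  match e with
  | ECst c => c
  | ET => fst p
  | ETh => snd p
  | EApp h e => h (eval e p)
  | EAdd e1 e2 => eval e1 p + eval e2 p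
  | ESub e1 e2 => eval e1 p - eval e2 p
  | EMul e1 e2 => eval e1 p * eval e2 p
  | EInv e => / eval e p
  end.

Fixpoint deriv_expr (b : bool) (e : expr) : expr :=
  match e with
  | ECst _ => ECst 0
  | ET => ECst (if b then 1 else 0)
  | ETh => ECst (if b then 0 else 1)
  | EApp h e => EMul (EApp (Derive h) e) (deriv_expr b e)
  | EAdd e1 e2 => EAdd (deriv_expr b e1) (deriv_expr b e2)
  | ESub e1 e2 => ESub (deriv_expr b e1) (deriv_expr b e2)
  | EMul e1 e2 => EAdd (EMul (deriv_expr b e1) e2) (EMul e1 (deriv_expr b e2))
  | EInv e => EMul (ECst (-1)) (EMul (deriv_expr b e) (EMul (EInv e) (EInv e)))
  end.

Fixpoint iter_deriv_expr (ds : list bool) (e : expr) : expr :=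
  match ds with nil => e | b :: ds' => deriv_expr b (iter_deriv_expr ds' e) end.

Fixpoint expr_ok (U : R * R -> Prop) (e : expr) : Prop :=
  match e with
  | ECst _ | ET | ETh => True
  | EApp h e => smooth1 h /\ expr_ok U e
  | EAdd e1 e2 | ESub e1 e2 | EMul e1 e2 => expr_ok U e1 /\ expr_ok U e2
  | EInv e => expr_ok U e /\ forall p, U p -> eval e p <> 0
  end.

Lemma expr_ok_deriv U b e : expr_ok U e -> expr_ok U (deriv_expr b e).
Proof. induction e; simpl; intros; try destruct b; simpl; intuition auto using smooth1_Derive. Qed.

Lemma expr_ok_iter_deriv U ds e : expr_ok U e -> expr_ok U (iter_deriv_expr ds e).
Proof. induction ds; simpl; auto using expr_ok_deriv. Qed.

Lemma eval_continuous U e p : expr_ok U e -> U p -> continuous (eval e) p.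
Proof.
  intros Hok Hp. induction e; simpl in *.
  - apply continuous_const.
  - destruct p; apply continuous_fst.
  - destruct p; apply continuous_snd.
  - destruct Hok as [Hh Hok]. apply (continuous_comp (eval e) h); auto.
    now apply smooth1_continuous.
  - destruct Hok. apply (continuous_plus (eval e1) (eval e2)); auto.
  - destruct Hok. apply (continuous_minus (eval e1) (eval e2)); auto.
  - destruct Hok. apply (continuous_mult (eval e1) (eval e2)); auto.
  - destruct Hok as [Hok Hnz]. apply (continuous_comp (eval e) Rinv); auto.
    now apply continuous_Rinv, Hnz.
Qed.

Definition slice (b : bool) (p : R * R) (s : R) : R * R := if b then (s, snd p) else (fst p, s).

Definition coord (b : bool) (p : R * R) : R := if b then fst p else snd p.

Definition partial_fun (b : bool) (e : expr) (p : R * R) (s : R) : R := eval e (slice b p s).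

Lemma partial_fun_at e b p : partial_fun b e p (coord b p) = eval e p.
Proof. now destruct b, p. Qed.

Lemma eval_is_derive U b e p : expr_ok U e -> U p ->
  is_derive (partial_fun b e p) (coord b p) (eval (deriv_expr b e) p).
Proof.
  intros Hok Hp. unfold partial_fun. induction e; simpl in *.
  - apply (is_derive_const (K := R_AbsRing) (V := R_NormedModule)).
  - destruct b; simpl.
    + apply (is_derive_id (K := R_AbsRing)).
    + apply (is_derive_const (K := R_AbsRing) (V := R_NormedModule)).
  - destruct b; simpl.
    + apply (is_derive_const (K := R_AbsRing) (V := R_NormedModule)).
    + apply (is_derive_id (K := R_AbsRing)).
  - destruct Hok as [Hh Hok].
    replace (Derive h (eval e p) * eval (deriv_expr b e) p)
      with (scal (eval (deriv_expr b e) p) (Derive h (eval e p))) by apply Rmult_comm.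
    apply (is_derive_comp h); [|auto].
    rewrite <- (partial_fun_at e b p). apply Derive_correct, smooth1_ex_derive, Hh.
  - destruct Hok. apply (is_derive_plus (fun s => eval e1 _) (fun s => eval e2 _)); auto.
  - destruct Hok. apply (is_derive_minus (fun s => eval e1 _) (fun s => eval e2 _)); auto.
  - destruct Hok as [Hok1 Hok2].
    pose proof (is_derive_mult _ _ _ _ _ (IHe1 Hok1) (IHe2 Hok2)) as Hd.
    fold (partial_fun b e1 p) (partial_fun b e2 p) in Hd.
    rewrite !partial_fun_at in Hd. apply Hd. intros; apply Rmult_comm.
  - destruct Hok as [Hok Hnz].
    pose proof (is_derive_inv _ _ _ (IHe Hok)) as Hd.
    fold (partial_fun b e p) in Hd. rewrite partial_fun_at in Hd.
    replace (-1 * (eval (deriv_expr b e) p * (/ eval e p * / eval e p)))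
      with (- eval (deriv_expr b e) p / eval e p ^ 2) by (field; auto).
    exact (Hd (Hnz p Hp)).
Qed.

Lemma locally_slice (U : R * R -> Prop) b p : open U -> U p ->
  locally (coord b p) (fun s => U (slice b p s)).
Proof.
  intros HU Hp. destruct (HU p Hp) as [eps He]. exists eps. intros s Hs.
  apply He. destruct b, p; split; simpl; auto; apply ball_center.
Qed.

Lemma iterp_eval U e ds : open U -> expr_ok U e ->
  forall p, U p -> iterp ds (eval e) p = eval (iter_deriv_expr ds e) p.
Proof.
  intros HU Hok. induction ds as [|b ds IH]; intros p Hp; [easy|].
  assert (Hd := eval_is_derive U b _ p (expr_ok_iter_deriv U ds e Hok) Hp).
  simpl. rewrite <- (is_derive_unique _ _ _ Hd). unfold partial_fun.
  destruct b; apply Derive_ext_loc;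
    [generalize (locally_slice U true p HU Hp)|generalize (locally_slice U false p HU Hp)];
    apply filter_imp; intros s Hs; apply IH, Hs.
Qed.

Lemma Cinf2_eval U e : open U -> expr_ok U e -> Cinf2 U (eval e).
Proof.
  intros HU Hok ds p Hp.
  assert (Hok' := expr_ok_iter_deriv U ds e Hok).
  assert (Hslice : forall b, ex_derive (fun s => iterp ds (eval e) (slice b p s)) (coord b p)).
  { intros b. apply ex_derive_ext_loc with (f := partial_fun b (iter_deriv_expr ds e) p).
    - generalize (locally_slice U b p HU Hp). apply filter_imp. intros s Hs.
      symmetry. now apply (iterp_eval U).
    - eexists. now apply (eval_is_derive U). }
  split; [|split; [exact (Hslice true)|exact (Hslice false)]].
  apply continuous_ext_loc with (g := eval (iter_deriv_expr ds e)).
  - generalize (HU p Hp). apply filter_imp. intros q Hq. symmetry. now apply (iterp_eval U).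
  - now apply (eval_continuous U).
Qed.

Definition canon_xi_fst_expr (L L' : R) : expr := EMul (EMul ET (ECst L')) (EInv (ECst L)).

Definition canon_xi_snd_expr (L : R) (f g : R -> R) (L' : R) (f' g' : R -> R) : expr :=
  let t' := canon_xi_fst_expr L L' in
  EAdd (EApp f' t')
       (EMul (EMul (ESub ETh (EApp f ET)) (ESub (EApp g' t') (EApp f' t')))
             (EInv (ESub (EApp g ET) (EApp f ET)))).

Definition vertical_gap_pos (f g : R -> R) (p : R * R) : Prop := 0 < g (fst p) - f (fst p).

Lemma open_vertical_gap_pos f g : smooth1 f -> smooth1 g -> open (vertical_gap_pos f g).
Proof.
  intros Hf Hg p Hp. unfold vertical_gap_pos in Hp.
  assert (Hc : continuous (fun t => g t - f t) (fst p))
    by (apply (continuous_minus g f); now apply smooth1_continuous).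
  assert (Hpos : locally (g (fst p) - f (fst p)) (fun y => 0 < y)).
  { exists (mkposreal _ Hp). intros y Hy.
    unfold ball in Hy; simpl in Hy. unfold AbsRing_ball, abs, minus, plus, opp in Hy; simpl in Hy.
    apply Rabs_lt_between in Hy. lra. }
  destruct (Hc _ Hpos) as [eps He]. exists eps. intros q [Hq _]. exact (He _ Hq).
Qed.

Section CanonXiSmooth.
Variables (L L' : R) (f g f' g' : R -> R).
Hypotheses (HL : L <> 0) (Hf : smooth1 f) (Hg : smooth1 g) (Hf' : smooth1 f') (Hg' : smooth1 g').

Lemma expr_ok_canon_xi_fst : expr_ok (vertical_gap_pos f g) (canon_xi_fst_expr L L').
Proof. simpl. auto. Qed.

Lemma expr_ok_canon_xi_snd : expr_ok (vertical_gap_pos f g) (canon_xi_snd_expr L f g L' f' g').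
Proof. unfold vertical_gap_pos. simpl. repeat split; auto. intros p Hp. lra. Qed.

Lemma canon_xi_continuous p : vertical_gap_pos f g p -> continuous (canon_xi L f g L' f' g') p.
Proof.
  intros Hp.
  apply continuous_ext with (f := fun p => (fst (canon_xi L f g L' f' g' p),
                                            snd (canon_xi L f g L' f' g' p))); [now intros []|].
  apply continuous_pair.
  - exact (eval_continuous _ (canon_xi_fst_expr L L') p expr_ok_canon_xi_fst Hp).
  - exact (eval_continuous _ (canon_xi_snd_expr L f g L' f' g') p expr_ok_canon_xi_snd Hp).
Qed.

Lemma canon_xi_smooth_map :
  (forall t, 0 <= t <= L -> f t < g t) -> smooth_map (region L f g) (canon_xi L f g L' f' g').
Proof.
  intros Hfg. exists (vertical_gap_pos f g). split; [|split; [|split]].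
  - now apply open_vertical_gap_pos.
  - intros [t th] [Ht _]. unfold vertical_gap_pos. simpl. specialize (Hfg t Ht). lra.
  - exact (Cinf2_eval _ (canon_xi_fst_expr L L') (open_vertical_gap_pos f g Hf Hg)
             expr_ok_canon_xi_fst).
  - exact (Cinf2_eval _ (canon_xi_snd_expr L f g L' f' g') (open_vertical_gap_pos f g Hf Hg)
             expr_ok_canon_xi_snd).
Qed.

End CanonXiSmooth.

(** * Nearly circular rectangles *)

Lemma atan_le x y : x <= y -> atan x <= atan y.
Proof. intros [Hlt|<-]; [left; now apply atan_increasing|lra]. Qed.

Lemma Rabs_lt_of_Rabs_atan_lt x d d0 : Rabs (atan x) < d -> d <= atan d0 -> Rabs x < d0.
Proof.
  intros H Hd. apply Rabs_lt_between in H. apply Rabs_lt_between.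
  split; apply Rnot_le_lt; intros Hx.
  - pose proof (atan_le _ _ Hx). rewrite atan_opp in *. lra.
  - pose proof (atan_le _ _ Hx). lra.
Qed.

Lemma Rabs_diff_le_of_Derive_bound h a b c x y : smooth1 h ->
  (forall t, a <= t <= b -> Rabs (Derive h t) <= c) ->
  a <= x <= b -> a <= y <= b -> Rabs (h x - h y) <= c * Rabs (x - y).
Proof.
  intros Hs Hd Hx Hy.
  destruct (MVT_gen h y x (Derive h)) as [z [Hz ->]].
  - intros z _. now apply Derive_correct, smooth1_ex_derive.
  - intros z _. now apply continuity_pt_filterlim, smooth1_continuous.
  - rewrite Rabs_mult. apply Rmult_le_compat_r; [apply Rabs_pos|]. apply Hd.
    pose proof (Rmin_glb y x a). pose proof (Rmax_lub y x b). lra.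
Qed.

Section NearlyCircularArc.
Context {d L : R} {h : R -> R}.
Hypothesis Harc : nearly_circular_arc d L h.

Lemma nearly_circular_arc_band : exists c, forall t, 0 <= t <= L -> c <= h t <= c + d.
Proof.
  destruct Harc as [[c [ht [Hht Hb]]] _]. exists c. intros t Ht. specialize (Hb t Ht). lra.
Qed.

Lemma nearly_circular_arc_osc x y : 0 <= x <= L -> 0 <= y <= L -> Rabs (h x - h y) <= d.
Proof.
  intros Hx Hy. destruct nearly_circular_arc_band as [c Hc].
  pose proof (Hc x Hx). pose proof (Hc y Hy). apply Rabs_le. lra.
Qed.

Lemma nearly_circular_arc_lipschitz d0 x y : smooth1 h -> d <= atan d0 ->
  0 <= x <= L -> 0 <= y <= L -> Rabs (h x - h y) <= d0 * Rabs (x - y).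
Proof.
  intros Hs Hd0. apply Rabs_diff_le_of_Derive_bound; [easy|]. intros t Ht. left.
  apply (Rabs_lt_of_Rabs_atan_lt _ d); [|easy].
  destruct Harc as [_ Hangle]. specialize (Hangle t Ht).
  now replace (PI / 2 - (PI / 2 - atan (Derive h t))) with (atan (Derive h t)) in Hangle by ring.
Qed.

End NearlyCircularArc.

(* The hypotheses of the theorem on one rectangle, for [delta = d]; the auxiliary [d0 >= tan d]
   bounds the slopes of the horizontal edges. *)
Record tame_rect (d d0 K L V : R) (f g : R -> R) : Prop := {
  tame_d_pos : 0 < d;
  tame_d_le : d <= d0;
  tame_d_atan : d <= atan d0;
  tame_d0_small : d0 <= 1 / 100;
  tame_K_pos : 0 < K;
  tame_f_smooth : smooth1 f;
  tame_g_smooth : smooth1 g;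
  tame_f_lt_g : forall t, 0 <= t <= L -> f t < g t;
  tame_nearly_circular : nearly_circular_rect d K L f g;
  tame_V_large : 1 / d < V;
  tame_leaf : forall t, 0 <= t <= L -> - d < (g t - f t) - V < d }.

Arguments tame_d_pos {d d0 K L V f g}.
Arguments tame_d_le {d d0 K L V f g}.
Arguments tame_d_atan {d d0 K L V f g}.
Arguments tame_d0_small {d d0 K L V f g}.
Arguments tame_K_pos {d d0 K L V f g}.
Arguments tame_f_smooth {d d0 K L V f g}.
Arguments tame_g_smooth {d d0 K L V f g}.
Arguments tame_f_lt_g {d d0 K L V f g}.
Arguments tame_nearly_circular {d d0 K L V f g}.
Arguments tame_V_large {d d0 K L V f g}.
Arguments tame_leaf {d d0 K L V f g}.

Section TameRect.
Context {d d0 K L V : R} {f g : R -> R}.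
Hypothesis HR : tame_rect d d0 K L V f g.

Lemma tame_K_le_L : K <= L.
Proof. apply (tame_nearly_circular HR). Qed.

Lemma tame_L_pos : 0 < L.
Proof. pose proof tame_K_le_L. pose proof (tame_K_pos HR). lra. Qed.

Lemma tame_dV : 1 < d * V.
Proof.
  pose proof (tame_d_pos HR) as Hd. pose proof (tame_V_large HR) as HV.
  apply (Rmult_lt_compat_l d) in HV; [|easy].
  now rewrite Rmult_div_assoc, Rmult_1_r, Rdiv_diag in HV by lra.
Qed.

Lemma tame_f_arc : nearly_circular_arc d L f.
Proof. apply (tame_nearly_circular HR). Qed.

Lemma tame_g_arc : nearly_circular_arc d L g.
Proof. apply (tame_nearly_circular HR). Qed.

Lemma tame_f_lipschitz x y : 0 <= x <= L -> 0 <= y <= L -> Rabs (f x - f y) <= d0 * Rabs (x - y).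
Proof.
  apply (nearly_circular_arc_lipschitz tame_f_arc); auto.
  - apply (tame_f_smooth HR).
  - apply (tame_d_atan HR).
Qed.

Lemma tame_g_lipschitz x y : 0 <= x <= L -> 0 <= y <= L -> Rabs (g x - g y) <= d0 * Rabs (x - y).
Proof.
  apply (nearly_circular_arc_lipschitz tame_g_arc); auto.
  - apply (tame_g_smooth HR).
  - apply (tame_d_atan HR).
Qed.

Lemma tame_f_osc x y : 0 <= x <= L -> 0 <= y <= L -> Rabs (f x - f y) <= d.
Proof. apply nearly_circular_arc_osc, tame_f_arc. Qed.

Lemma tame_leaf_osc x y : 0 <= x <= L -> 0 <= y <= L ->
  Rabs ((g x - f x) - (g y - f y)) <= 2 * d.
Proof.
  intros Hx Hy. replace ((g x - f x) - (g y - f y)) with ((g x - g y) - (f x - f y)) by ring.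
  eapply Rle_trans; [apply Rabs_sub_le|].
  pose proof (nearly_circular_arc_osc tame_g_arc x y Hx Hy). pose proof (tame_f_osc x y Hx Hy).
  lra.
Qed.

Lemma tame_leaf_lipschitz x y : 0 <= x <= L -> 0 <= y <= L ->
  Rabs ((g x - f x) - (g y - f y)) <= 2 * d0 * Rabs (x - y).
Proof.
  intros Hx Hy. replace ((g x - f x) - (g y - f y)) with ((g x - g y) - (f x - f y)) by ring.
  eapply Rle_trans; [apply Rabs_sub_le|].
  pose proof (tame_g_lipschitz x y Hx Hy). pose proof (tame_f_lipschitz x y Hx Hy). lra.
Qed.

Lemma tame_path_le P Q : region L f g P -> region L f g Q ->
  path_le (region L f g) P Q (eucl P Q + 4 * d).
Proof.
  destruct (nearly_circular_arc_band tame_f_arc) as [cf Hcf].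
  destruct (nearly_circular_arc_band tame_g_arc) as [cg Hcg].
  apply region_path_le with (lo := cf + d) (hi := cg).
  - assert (H0 : 0 <= 0 <= L) by (pose proof tame_L_pos; lra).
    pose proof (tame_leaf HR 0 H0). pose proof (Hcf 0 H0). pose proof (Hcg 0 H0).
    pose proof tame_dV. pose proof (tame_d_le HR).
    pose proof (tame_d0_small HR). nra.
  - intros t Ht. pose proof (Hcf t Ht). pose proof (Hcg t Ht). lra.
Qed.

Lemma tame_pdist_le P Q : region L f g P -> region L f g Q ->
  pdist (region L f g) P Q <= eucl P Q + 4 * d.
Proof. intros HP HQ. now apply pdist_le, tame_path_le. Qed.

Lemma tame_eucl_le_pdist P Q : region L f g P -> region L f g Q ->
  eucl P Q <= pdist (region L f g) P Q.
Proof. intros HP HQ. apply eucl_le_pdist. eexists. now apply tame_path_le. Qed.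

End TameRect.

(** * Distortion estimates for the canonical linear map *)

(* [N / D] is the scaling factor of [canon_xi] on a vertical leaf; this bounds its variation. *)
Lemma Rabs_mul_ratio_diff_le u1 D1 D2 N1 N2 a b : 0 < D1 -> 0 < D2 -> 0 <= u1 <= D1 -> 0 <= N1 ->
  Rabs (N2 - N1) <= a -> Rabs (D2 - D1) <= b ->
  Rabs (u1 * (N2 / D2 - N1 / D1)) <= (a * D1 + N1 * b) / D2.
Proof.
  intros H1 H2 Hu HN Ha Hb.
  replace (u1 * (N2 / D2 - N1 / D1))
    with ((u1 / D1) * (((N2 - N1) * D1 - N1 * (D2 - D1)) / D2)) by (field; lra).
  assert (Hq : 0 <= u1 / D1 <= 1).
  { split; [apply Rdiv_le_0_compat; lra|]. apply Rle_div_l; lra. }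
  assert (Hn : Rabs ((N2 - N1) * D1 - N1 * (D2 - D1)) <= a * D1 + N1 * b).
  { eapply Rle_trans; [apply Rabs_sub_le|].
    rewrite !Rabs_mult, (Rabs_right D1), (Rabs_right N1) by lra.
    apply Rplus_le_compat; [apply Rmult_le_compat_r|apply Rmult_le_compat_l]; lra. }
  rewrite Rabs_mult, (Rabs_right (u1 / D1)), Rabs_div, (Rabs_right D2) by lra.
  apply Rle_trans with (1 * (Rabs ((N2 - N1) * D1 - N1 * (D2 - D1)) / D2)).
  - apply Rmult_le_compat_r; [apply Rdiv_le_0_compat; [apply Rabs_pos|lra]|lra].
  - rewrite Rmult_1_l. apply Rmult_le_compat_r; [left; apply Rinv_0_lt_compat|]; lra.
Qed.

Section LeafRatio.
Context {d K V V' : R}.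
Hypotheses (Hd : 0 < d) (Hd1 : d <= 1 / 100) (HdV : 1 < d * V) (HdK : d * (K + 1) <= 1)
  (HVV : - K / 2 < V - V' < K / 2).

Lemma leaf_length_inv_le : 1 <= 2 * d * (V - d).
Proof. nra. Qed.

Lemma K_lt_V : K + 1 < V.
Proof. nra. Qed.

Lemma d_lt_V : d < V.
Proof. nra. Qed.

Variables (D N : R).
Hypotheses (HD : V - d < D < V + d) (HN : V' - d < N < V' + d).

Lemma Rabs_leaf_ratio_sub_1 : Rabs (N / D - 1) <= (K / 2 + 2 * d) / (V - d).
Proof.
  pose proof d_lt_V.
  replace (N / D - 1) with ((N - D) / D) by (field; lra).
  rewrite Rabs_div, (Rabs_right D) by lra.
  apply Rdiv_le_compat; [split; [apply Rabs_pos|apply Rabs_le; lra]|lra].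
Qed.

Lemma leaf_ratio_le : 0 <= N / D <= 1 + d * K + 4 * d ^ 2.
Proof.
  pose proof leaf_length_inv_le. pose proof K_lt_V. pose proof d_lt_V.
  pose proof Rabs_leaf_ratio_sub_1.
  assert (Hinv : (K / 2 + 2 * d) / (V - d) <= d * K + 4 * d ^ 2).
  { apply Rle_div_l; nra. }
  split; [apply Rdiv_le_0_compat; lra|].
  pose proof (Rabs_le_between (N / D - 1) ((K / 2 + 2 * d) / (V - d))). lra.
Qed.

Lemma leaf_ratio_le_2 : N / D <= 2.
Proof.
  pose proof leaf_ratio_le. assert (d * K + 4 * d ^ 2 <= 1) by nra. lra.
Qed.

Lemma leaf_ratio_dev_le : Rabs (N / D - 1) * (V + d) <= K / 2 + 5 * d.
Proof.
  pose proof leaf_length_inv_le. pose proof d_lt_V.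
  apply Rle_trans with ((K / 2 + 2 * d) / (V - d) * (V + d)).
  - apply Rmult_le_compat_r; [lra|apply Rabs_leaf_ratio_sub_1].
  - replace ((K / 2 + 2 * d) / (V - d) * (V + d))
      with ((K / 2 + 2 * d) + (K / 2 + 2 * d) * (2 * d / (V - d))) by (field; lra).
    assert (H2d : 2 * d / (V - d) <= 4 * d ^ 2) by (apply Rle_div_l; nra).
    assert (HK : 0 <= K) by nra.
    assert ((K / 2 + 2 * d) * (2 * d / (V - d)) <= (K / 2 + 2 * d) * (4 * d ^ 2))
      by (apply Rmult_le_compat_l; lra).
    nra.
Qed.

End LeafRatio.

Section CanonXi.
Context {d d0 K L V L' V' : R} {f g f' g' : R -> R}.
Hypotheses (HR : tame_rect d d0 K L V f g) (HR' : tame_rect d d0 K L' V' f' g').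
Hypotheses (HLL : - d < L - L' < d) (HVV : - K / 2 < V - V' < K / 2).
Hypothesis HdK : d0 * (K + 1) <= 1.
Hypothesis Hd0K : d0 <= K / 100.

Let xi := canon_xi L f g L' f' g'.

Lemma rescale_range t : 0 <= t <= L -> 0 <= t * L' / L <= L'.
Proof.
  intros Ht. pose proof (tame_L_pos HR). pose proof (tame_L_pos HR').
  split; [apply Rdiv_le_0_compat; nra|]. apply Rle_div_l; nra.
Qed.

Lemma canon_xi_region p : region L f g p -> region L' f' g' (xi p).
Proof.
  destruct p as [t th]. intros [Ht Hth]; simpl in *.
  pose proof (rescale_range t Ht) as Hs.
  pose proof (tame_f_lt_g HR t Ht).
  pose proof (tame_f_lt_g HR' _ Hs).
  split; [exact Hs|]. unfold xi, canon_xi; simpl.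
  set (s := t * L' / L) in *.
  assert (Hu : 0 <= (th - f t) / (g t - f t) <= 1).
  { split; [apply Rdiv_le_0_compat; lra|]. apply Rle_div_l; lra. }
  replace ((th - f t) * (g' s - f' s) / (g t - f t))
    with ((th - f t) / (g t - f t) * (g' s - f' s)) by (field; lra).
  split; nra.
Qed.

Lemma canon_xi_inv p : region L f g p -> canon_xi L' f' g' L f g (xi p) = p.
Proof.
  destruct p as [t th]. intros [Ht _]; simpl in *.
  pose proof (tame_L_pos HR). pose proof (tame_L_pos HR').
  pose proof (tame_f_lt_g HR t Ht).
  pose proof (tame_f_lt_g HR' _ (rescale_range t Ht)).
  unfold xi, canon_xi; simpl.
  replace (t * L' / L * L / L') with t by (field; lra).
  f_equal. field. lra.
Qed.

Lemma canon_xi_constants :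
  0 < d /\ d <= d0 /\ d0 <= 1 / 100 /\ 0 < K /\ 1 < d * V /\ d * (K + 1) <= 1 /\ K + 1 < V.
Proof.
  pose proof (tame_d_pos HR) as Hd. pose proof (tame_d_le HR).
  pose proof (tame_d0_small HR). pose proof (tame_K_pos HR).
  pose proof (tame_dV HR) as HdV.
  assert (HdK' : d * (K + 1) <= 1) by nra.
  repeat split; try easy. exact (K_lt_V Hd ltac:(lra) HdV HdK').
Qed.

Lemma rescale_ratio_le : 0 <= L' / L <= 1 + d / K.
Proof.
  destruct canon_xi_constants as (Hd & _ & _ & HK & _).
  pose proof (tame_L_pos HR). pose proof (tame_K_le_L HR).
  pose proof (tame_L_pos HR').
  split; [apply Rdiv_le_0_compat; lra|].
  apply Rle_trans with ((L + d) / L); [apply Rdiv_le_compat; lra|].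
  replace ((L + d) / L) with (1 + d / L) by (field; lra).
  assert (d / L <= d / K) by (apply Rdiv_le_compat; lra). lra.
Qed.

Lemma Rabs_rescale_diff x y : Rabs (x * L' / L - y * L' / L) = L' / L * Rabs (x - y).
Proof.
  pose proof (tame_L_pos HR). pose proof rescale_ratio_le.
  replace (x * L' / L - y * L' / L) with (L' / L * (x - y)) by (field; lra).
  rewrite Rabs_mult, Rabs_right by lra. easy.
Qed.

Lemma Rabs_rescale_sub_le t1 t2 : 0 <= t1 <= L -> 0 <= t2 <= L ->
  Rabs (L' / L * (t2 - t1) - (t2 - t1)) <= d.
Proof.
  intros Ht1 Ht2. pose proof (tame_L_pos HR).
  replace (L' / L * (t2 - t1) - (t2 - t1)) with ((L' - L) * ((t2 - t1) / L)) by (field; lra).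
  rewrite Rabs_mult, Rabs_div, (Rabs_right L) by lra.
  assert (Rabs (t2 - t1) / L <= 1) by (apply Rle_div_l; [lra|]; apply Rabs_le; lra).
  assert (Rabs (L' - L) <= d) by (apply Rabs_le; lra).
  assert (0 <= Rabs (t2 - t1) / L) by (apply Rdiv_le_0_compat; [apply Rabs_pos|lra]).
  pose proof (Rabs_pos (L' - L)).
  apply Rle_trans with (d * 1); [apply Rmult_le_compat|]; lra.
Qed.

Definition stretch (t : R) : R := (g' (t * L' / L) - f' (t * L' / L)) / (g t - f t).

Lemma canon_xi_fst_diff t1 th1 t2 th2 :
  fst (xi (t2, th2)) - fst (xi (t1, th1)) = L' / L * (t2 - t1).
Proof. pose proof (tame_L_pos HR). unfold xi, canon_xi; simpl. field. lra. Qed.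

Lemma canon_xi_snd t th : snd (xi (t, th)) = f' (t * L' / L) + (th - f t) * stretch t.
Proof. unfold xi, canon_xi, stretch; simpl. unfold Rdiv. ring. Qed.

Lemma stretch_le t : 0 <= t <= L -> 0 <= stretch t <= 1 + d * K + 4 * d ^ 2 /\ stretch t <= 2.
Proof.
  intros Ht. destruct canon_xi_constants as (Hd & Hdd0 & Hd0 & _ & HdV & HdK' & _).
  assert (Hd1 : d <= 1 / 100) by lra.
  pose proof (tame_leaf HR t Ht). pose proof (tame_leaf HR' _ (rescale_range t Ht)).
  split; [apply (leaf_ratio_le Hd Hd1 HdV HdK' HVV)|apply (leaf_ratio_le_2 Hd Hd1 HdV HdK' HVV)];
    lra.
Qed.

Lemma stretch_sub_1_le t : 0 <= t <= L -> Rabs (stretch t - 1) * (V + d) <= K / 2 + 5 * d.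
Proof.
  intros Ht. destruct canon_xi_constants as (Hd & Hdd0 & Hd0 & _ & HdV & HdK' & _).
  assert (Hd1 : d <= 1 / 100) by lra.
  pose proof (tame_leaf HR t Ht). pose proof (tame_leaf HR' _ (rescale_range t Ht)).
  apply (leaf_ratio_dev_le Hd Hd1 HdV HdK' HVV); lra.
Qed.

Lemma stretch_drift_le t1 t2 u : 0 <= t1 <= L -> 0 <= t2 <= L -> 0 <= u <= g t1 - f t1 ->
  Rabs (u * (stretch t2 - stretch t1)) <= Rmin (8 * d) (12 * d0 * Rabs (t2 - t1)).
Proof.
  intros Ht1 Ht2 Hu. destruct canon_xi_constants as (Hd & Hdd0 & Hd0 & HK & HdV & HdK' & HKV).
  pose proof (rescale_range t1 Ht1) as Hs1. pose proof (rescale_range t2 Ht2) as Hs2.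
  pose proof rescale_ratio_le as Hlam.
  assert (HdK0 : d / K <= 1) by (apply Rle_div_l; lra).
  pose proof (tame_leaf HR t1 Ht1). pose proof (tame_leaf HR t2 Ht2).
  pose proof (tame_leaf HR' _ Hs1). pose proof (tame_leaf HR' _ Hs2).
  pose proof (tame_leaf_osc HR t2 t1 Ht2 Ht1). pose proof (tame_leaf_osc HR' _ _ Hs2 Hs1).
  pose proof (tame_leaf_lipschitz HR t2 t1 Ht2 Ht1).
  pose proof (tame_leaf_lipschitz HR' _ _ Hs2 Hs1) as HNN. rewrite Rabs_rescale_diff in HNN.
  unfold stretch.
  set (D1 := g t1 - f t1) in *. set (D2 := g t2 - f t2) in *.
  set (N1 := g' (t1 * L' / L) - f' (t1 * L' / L)) in *.
  set (N2 := g' (t2 * L' / L) - f' (t2 * L' / L)) in *.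
  set (lam := L' / L) in *. set (dt := Rabs (t2 - t1)) in *.
  assert (Hdt : 0 <= dt) by apply Rabs_pos.
  apply Rmin_glb.
  - eapply Rle_trans; [apply (Rabs_mul_ratio_diff_le _ _ _ _ _ (2 * d) (2 * d)); lra|].
    apply Rle_div_l; nra.
  - eapply Rle_trans;
      [apply (Rabs_mul_ratio_diff_le _ _ _ _ _ (2 * d0 * lam * dt) (2 * d0 * dt)); lra|].
    apply Rle_div_l; [lra|].
    assert (HlD1 : lam * D1 <= 2 * D1) by (apply Rmult_le_compat_r; lra).
    assert (Hd0dt : 0 <= d0 * dt) by (apply Rmult_le_pos; lra).
    apply Rle_trans with (d0 * dt * (2 * (lam * D1) + 2 * N1)); [right; ring|].
    replace (12 * d0 * dt * D2) with (d0 * dt * (12 * D2)) by ring.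
    apply Rmult_le_compat_l; lra.
Qed.

Lemma canon_xi_snd_additive t1 th1 t2 th2 :
  region L f g (t1, th1) -> region L f g (t2, th2) ->
  Rabs ((snd (xi (t2, th2)) - snd (xi (t1, th1))) - (th2 - th1)) <= K / 2 + 15 * d.
Proof.
  intros [Ht1 Hth1] [Ht2 Hth2]; cbn [fst snd] in *.
  pose proof (rescale_range t1 Ht1) as Hs1. pose proof (rescale_range t2 Ht2) as Hs2.
  rewrite !canon_xi_snd.
  (* the edges move, the leaf over [t2] is stretched, and the stretch factor varies with [t] *)
  replace (f' (t2 * L' / L) + (th2 - f t2) * stretch t2
           - (f' (t1 * L' / L) + (th1 - f t1) * stretch t1) - (th2 - th1))
    with ((f' (t2 * L' / L) - f' (t1 * L' / L)) - (f t2 - f t1)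
          + ((th2 - f t2) - (th1 - f t1)) * (stretch t2 - 1)
          + (th1 - f t1) * (stretch t2 - stretch t1)) by ring.
  eapply Rle_trans; [apply Rabs_add4_le|].
  pose proof (tame_f_osc HR t2 t1 Ht2 Ht1). pose proof (tame_f_osc HR' _ _ Hs2 Hs1).
  pose proof (tame_leaf HR t1 Ht1). pose proof (tame_leaf HR t2 Ht2).
  assert (Hstretch : Rabs (((th2 - f t2) - (th1 - f t1)) * (stretch t2 - 1)) <= K / 2 + 5 * d).
  { rewrite Rabs_mult, Rmult_comm. eapply Rle_trans; [|exact (stretch_sub_1_le t2 Ht2)].
    apply Rmult_le_compat_l; [apply Rabs_pos|apply Rabs_le; lra]. }
  pose proof (stretch_drift_le t1 t2 (th1 - f t1) Ht1 Ht2 ltac:(lra)).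
  pose proof (Rmin_l (8 * d) (12 * d0 * Rabs (t2 - t1))). lra.
Qed.

Lemma canon_xi_snd_shear t1 th1 t2 th2 :
  region L f g (t1, th1) -> region L f g (t2, th2) ->
  Rabs ((snd (xi (t2, th2)) - snd (xi (t1, th1))) - stretch t2 * (th2 - th1))
    <= 16 * d0 * Rabs (t2 - t1).
Proof.
  intros [Ht1 Hth1] [Ht2 Hth2]; cbn [fst snd] in *.
  pose proof (rescale_range t1 Ht1) as Hs1. pose proof (rescale_range t2 Ht2) as Hs2.
  rewrite !canon_xi_snd.
  replace (f' (t2 * L' / L) + (th2 - f t2) * stretch t2
           - (f' (t1 * L' / L) + (th1 - f t1) * stretch t1) - stretch t2 * (th2 - th1))
    with ((f' (t2 * L' / L) - f' (t1 * L' / L)) - stretch t2 * (f t2 - f t1) + 0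
          + (th1 - f t1) * (stretch t2 - stretch t1)) by ring.
  eapply Rle_trans; [apply Rabs_add4_le|].
  pose proof (tame_f_lipschitz HR t2 t1 Ht2 Ht1) as HF.
  pose proof (tame_f_lipschitz HR' _ _ Hs2 Hs1) as HF'. rewrite Rabs_rescale_diff in HF'.
  pose proof (tame_leaf HR t1 Ht1). pose proof rescale_ratio_le.
  pose proof (tame_K_pos HR). pose proof (tame_d_le HR). pose proof (tame_d0_small HR).
  assert (d / K <= 1) by (apply Rle_div_l; lra).
  destruct (stretch_le t2 Ht2) as [Hr Hr2].
  assert (Hd0dt : 0 <= d0 * Rabs (t2 - t1)) by (apply Rmult_le_pos; [lra|apply Rabs_pos]).
  rewrite Rabs_R0, Rabs_mult, (Rabs_right (stretch t2)) by lra.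
  assert (stretch t2 * Rabs (f t2 - f t1) <= 2 * (d0 * Rabs (t2 - t1)))
    by (apply Rmult_le_compat; [lra|apply Rabs_pos|lra|lra]).
  assert (d0 * Rabs (t2 - t1) * (L' / L) <= d0 * Rabs (t2 - t1) * 2)
    by (apply Rmult_le_compat_l; lra).
  pose proof (stretch_drift_le t1 t2 (th1 - f t1) Ht1 Ht2 ltac:(lra)).
  pose proof (Rmin_r (8 * d) (12 * d0 * Rabs (t2 - t1))). lra.
Qed.

Lemma canon_xi_eucl_le_add a b : region L f g a -> region L f g b ->
  eucl (xi a) (xi b) <= eucl a b + K / 2 + 16 * d.
Proof.
  destruct a as [t1 th1], b as [t2 th2]. intros Ha Hb.
  pose proof (canon_xi_snd_additive t1 th1 t2 th2 Ha Hb).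
  destruct Ha as [Ht1 _], Hb as [Ht2 _]; simpl in *.
  pose proof (Rabs_rescale_sub_le t1 t2 Ht1 Ht2).
  rewrite !eucl_norm2, canon_xi_fst_diff. simpl in *.
  eapply Rle_trans; [apply (norm2_le_perturb (t2 - t1) (th2 - th1))|]. lra.
Qed.

Lemma canon_xi_eucl_le_mul a b : region L f g a -> region L f g b ->
  eucl (xi a) (xi b) <= (1 + d / K + d * K + 4 * d ^ 2 + 16 * d0) * eucl a b.
Proof.
  destruct a as [t1 th1], b as [t2 th2]. intros Ha Hb.
  pose proof (canon_xi_snd_shear t1 th1 t2 th2 Ha Hb).
  destruct Hb as [Ht2 _]; simpl in Ht2.
  destruct canon_xi_constants as (Hd & Hdd0 & _ & HK & _).
  destruct (stretch_le t2 Ht2) as [Hr _]. pose proof rescale_ratio_le.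
  assert (0 <= d / K) by (apply Rdiv_le_0_compat; lra).
  assert (0 <= d * K) by (apply Rmult_le_pos; lra). pose proof (pow2_ge_0 d).
  rewrite !eucl_norm2, canon_xi_fst_diff. simpl in *.
  replace (1 + d / K + d * K + 4 * d ^ 2 + 16 * d0)
    with ((1 + d / K + d * K + 4 * d ^ 2) + 16 * d0) by ring.
  apply (norm2_shear_le _ (stretch t2)); lra.
Qed.

Lemma canon_xi_pdist_le_mul p q : region L f g p -> region L f g q ->
  pdist (region L' f' g') (xi p) (xi q)
    <= (1 + d / K + d * K + 4 * d ^ 2 + 16 * d0) * pdist (region L f g) p q.
Proof.
  intros Hp Hq.
  destruct canon_xi_constants as (Hd & Hdd0 & _ & HK & _).
  apply pdist_image_le.
  - assert (0 <= d / K) by (apply Rdiv_le_0_compat; lra).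
    assert (0 <= d * K) by (apply Rmult_le_pos; lra). pose proof (pow2_ge_0 d). lra.
  - exact canon_xi_region.
  - intros [t th] [Ht _]. pose proof (tame_f_lt_g HR t Ht).
    apply canon_xi_continuous.
    + pose proof (tame_L_pos HR). lra.
    + apply (tame_f_smooth HR).
    + apply (tame_g_smooth HR).
    + apply (tame_f_smooth HR').
    + apply (tame_g_smooth HR').
    + unfold vertical_gap_pos; simpl. lra.
  - exact canon_xi_eucl_le_mul.
  - eexists. now apply (tame_path_le HR).
Qed.

Lemma canon_xi_pdist_lt_add p q : region L f g p -> region L f g q ->
  pdist (region L' f' g') (xi p) (xi q) < pdist (region L f g) p q + K.
Proof.
  intros Hp Hq.
  destruct canon_xi_constants as (Hd & Hdd0 & _ & HK & _).
  pose proof (tame_pdist_le HR' _ _ (canon_xi_region p Hp) (canon_xi_region q Hq)).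
  pose proof (canon_xi_eucl_le_add p q Hp Hq).
  pose proof (tame_eucl_le_pdist HR p q Hp Hq).
  lra.
Qed.

End CanonXi.

Lemma ratio_bounds_of_two_sided c eps P P' : 1 < c <= 1 + eps / 2 -> 0 < P ->
  P' <= c * P -> P <= c * P' -> / (1 + eps) * P < P' < (1 + eps) * P.
Proof.
  intros Hc HP Hfwd Hinv.
  assert (HP' : 0 < P') by nra.
  split; [|nra].
  apply Rmult_lt_reg_l with (1 + eps); [lra|].
  rewrite <- Rmult_assoc, Rinv_r, Rmult_1_l by lra. nra.
Qed.

Lemma canon_xi_bilip eps d d0 K L V L' V' f g f' g' :
  tame_rect d d0 K L V f g -> tame_rect d d0 K L' V' f' g' ->
  - d < L - L' < d -> - K / 2 < V - V' < K / 2 ->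
  d0 * (K + 1) <= 1 -> d0 <= K / 100 ->
  d / K + d * K + 4 * d ^ 2 + 16 * d0 <= eps / 2 ->
  bilip (1 + eps) K (region L f g) (region L' f' g') (canon_xi L f g L' f' g').
Proof.
  intros HR HR' HLL HVV HdK Hd0K Hsmall.
  assert (HLL' : - d < L' - L < d) by lra. assert (HVV' : - K / 2 < V' - V < K / 2) by lra.
  set (xi := canon_xi L f g L' f' g'). set (xi' := canon_xi L' f' g' L f g).
  set (Om := region L f g). set (Om' := region L' f' g').
  assert (Hback : forall p q, Om p -> Om q -> pdist Om p q = pdist Om (xi' (xi p)) (xi' (xi q))).
  { intros p q Hp Hq. unfold xi, xi'. now rewrite !(canon_xi_inv HR HR'). }
  assert (Hmap : forall p, Om p -> Om' (xi p)) by exact (canon_xi_region HR HR').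
  split; intros p q Hp Hq.
  - intros Hpq.
    pose proof (canon_xi_pdist_le_mul HR HR' HLL HVV HdK Hd0K p q Hp Hq) as Hfwd.
    pose proof (canon_xi_pdist_le_mul HR' HR HLL' HVV' HdK Hd0K _ _ (Hmap p Hp) (Hmap q Hq))
      as Hinv.
    rewrite <- Hback in Hinv by easy. fold xi Om Om' in Hfwd, Hinv.
    pose proof (eucl_le_pdist Om p q (ex_intro _ _ (tame_path_le HR p q Hp Hq))).
    pose proof (eucl_gt_0 p q Hpq).
    destruct (canon_xi_constants HR HdK) as (Hd & Hdd0 & _ & HK & _).
    assert (0 < d / K) by (apply Rdiv_lt_0_compat; lra).
    assert (0 <= d * K) by (apply Rmult_le_pos; lra). pose proof (pow2_ge_0 d).
    apply (ratio_bounds_of_two_sided (1 + d / K + d * K + 4 * d ^ 2 + 16 * d0)); lra.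
  - pose proof (canon_xi_pdist_lt_add HR HR' HLL HVV HdK Hd0K p q Hp Hq) as Hfwd.
    pose proof (canon_xi_pdist_lt_add HR' HR HLL' HVV' HdK Hd0K _ _ (Hmap p Hp) (Hmap q Hq))
      as Hinv.
    rewrite <- Hback in Hinv by easy. fold xi Om Om' in Hfwd, Hinv. lra.
Qed.

(** * Choice of [delta] *)

Local Ltac Rmin_le_arg :=
  first [ apply Rle_refl
        | eapply Rle_trans; [apply Rmin_l|Rmin_le_arg]
        | eapply Rle_trans; [apply Rmin_r|Rmin_le_arg] ].

Lemma small_parameter eps K : 0 < eps -> 0 < K ->
  exists d0, 0 < d0 /\ d0 <= 1 / 100 /\ d0 * (K + 1) <= 1 /\ d0 <= K / 100 /\
    forall d, 0 < d -> d <= d0 -> d / K + d * K + 4 * d ^ 2 + 16 * d0 <= eps / 2.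
Proof.
  intros Heps HK.
  exists (Rmin (Rmin (Rmin (1 / 100) (K / 100)) (1 / (K + 1)))
               (Rmin (Rmin (eps * K / 8) (eps / (8 * (K + 1)))) (eps / 128))).
  set (d0 := Rmin _ _).
  assert (Hd0 : d0 <= 1 / 100 /\ d0 <= K / 100 /\ d0 <= 1 / (K + 1) /\
                d0 <= eps * K / 8 /\ d0 <= eps / (8 * (K + 1)) /\ d0 <= eps / 128).
  { unfold d0. repeat split; Rmin_le_arg. }
  destruct Hd0 as (H1 & H2 & H3 & H4 & H5 & H6).
  assert (Hpos : 0 < d0).
  { unfold d0. repeat apply Rmin_glb_lt; apply Rdiv_lt_0_compat; nra. }
  do 2 (split; [easy|]). split; [|split; [easy|]].
  - apply Rle_trans with (1 / (K + 1) * (K + 1)); [apply Rmult_le_compat_r; lra|].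
    right. field. lra.
  - intros d Hd Hdd0.
    assert (d / K <= eps / 8) by (apply Rle_div_l; nra).
    assert (d * K <= eps / 8).
    { apply Rle_trans with (eps / (8 * (K + 1)) * (K + 1)); [nra|]. right. field. lra. }
    assert (d ^ 2 <= d0 * (1 / 100)) by (simpl; nra).
    lra.
Qed.

Theorem lemma4p2 :
  forall eps K : R, 0 < eps -> 0 < K ->
  exists delta : R, 0 < delta /\
  forall (L L' : R) (f g f' g' : R -> R) (V V' : R),
    smooth1 f -> smooth1 g -> smooth1 f' -> smooth1 g' ->
    (forall t, 0 <= t <= L -> f t < g t) ->
    (forall t, 0 <= t <= L' -> f' t < g' t) ->
    nearly_circular_rect delta K L f g ->
    nearly_circular_rect delta K L' f' g' ->
    - delta < L - L' < delta ->
    1 / delta < V -> 1 / delta < V' -> - K / 2 < V - V' < K / 2 ->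
    (forall t, 0 <= t <= L -> - delta < (g t - f t) - V < delta) ->
    (forall t, 0 <= t <= L' -> - delta < (g' t - f' t) - V' < delta) ->
    smooth_map (region L f g) (canon_xi L f g L' f' g') /\
    bilip (1 + eps) K (region L f g) (region L' f' g') (canon_xi L f g L' f' g').
Proof.
  intros eps K Heps HK.
  destruct (small_parameter eps K Heps HK) as (d0 & Hd0 & Hd0s & HdK & Hd0K & Hsmall).
  assert (Hatan : 0 < atan d0) by (rewrite <- atan_0; now apply atan_increasing).
  exists (Rmin d0 (atan d0)). split; [now apply Rmin_glb_lt|].
  set (d := Rmin d0 (atan d0)).
  assert (Hd : 0 < d) by now apply Rmin_glb_lt.
  intros L L' f g f' g' V V' Hf Hg Hf' Hg' Hfg Hfg' HR HR' HLL HV HV' HVV HD HD'.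
  assert (HT : tame_rect d d0 K L V f g)
    by (constructor; auto; [apply Rmin_l|apply Rmin_r]).
  assert (HT' : tame_rect d d0 K L' V' f' g')
    by (constructor; auto; [apply Rmin_l|apply Rmin_r]).
  split.
  - apply canon_xi_smooth_map; auto. pose proof (tame_L_pos HT). lra.
  - apply (canon_xi_bilip eps d d0 K L V L' V'); auto. apply Hsmall; [easy|apply Rmin_l].
Qed.
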